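(* If an ES basic fusion operator $\nabla$ satisfies (ESF-U) and (ESF-I), then it satisfies (ESF-P).
   Context: Setting: epistemic space $(\mathcal E,B,\mathcal L_{\mathcal P})$ ($\mathcal E$ nonempty, $B:\mathcal E\to$ propositional formulas over finite $\mathcal P$, image modulo equivalence exactly the consistent formulas); agents: well-ordered set $\mathcal S$; society: nonempty finite $N\subseteq\mathcal S$; $N$-profile $\Phi:N\to\mathcal E$, $E_i=\Phi(i)$, identified with $E_i$ if $N=\{i\}$; profiles on $\{i_1<\dots<i_n\}$, $\{j_1<\dots<j_m\}$ equivalent if $n=m$ and entries coincide position-wise. ES basic fusion operator: a map $\nabla(\Phi,E)\in\mathcal E$ with (ESF1) $B(\nabla(\Phi,E))\vdash B(E)$; (ESF2) equivalent profiles and $B(E)\equiv B(E')$ give equivalent $B(\nabla)$; (ESF3) if $B(E)\equiv B(E')\wedge B(E'')$ then $B(\nabla(\Phi,E'))\wedge B(E'')\vdash B(\nabla(\Phi,E))$; (ESF4) if moreover $B(\nabla(\Phi,E'))\wedge B(E'')\nvdash\bot$ then $B(\nabla(\Phi,E))\vdash B(\nabla(\Phi,E'))\wedge B(E'')$. (ESF-U): for every society $N$, $N$-profile $\Phi$, $E$: if $E_i=E_j$ for all $i,j\in N$ then $B(\nabla(\Phi,E))\equiv B(\nabla(E_i,E))$ for all $i\in N$. (ESF-I): for every $N$, $N$-profiles $\Phi,\Phi'$ and $E$, if for every $E'$ with $B(E')\vdash B(E)$ one has $B(\nabla(E_j,E'))\equiv B(\nabla(E'_j,E'))$ for all $j\in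 N$, then $B(\nabla(\Phi,E))\equiv B(\nabla(\Phi',E))$. (ESF-P): for every $N$, $N$-profile $\Phi$, $E,E'$: if $\bigwedge_{i\in N}B(\nabla(E_i,E))\nvdash\bot$ and $B(\nabla(E_i,E))\wedge B(E')\vdash\bot$ for all $i\in N$, then $B(\nabla(\Phi,E))\wedge B(E')\vdash\bot$. *)

From HB Require Import structures.
From mathcomp Require Import all_boot all_order.
Set Implicit Arguments. Unset Strict Implicit. Unset Printing Implicit Defensive.
Import Order.TTheory.
Local Open Scope order_scope.

Inductive form (P : Type) : Type :=
  | FVar : P -> form P
  | FTop : form P
  | FBot : form P
  | FNeg : form P -> form P
  | FAnd : form P -> form P -> form P
  | FOr  : form P -> form P -> form P
  | FImp : form P -> form P -> form P.
Arguments FTop {P}. Arguments FBot {P}.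

Fixpoint eval (P : Type) (v : P -> bool) (f : form P) : bool :=
  match f with
  | FVar p => v p
  | FTop => true
  | FBot => false
  | FNeg g => ~~ eval v g
  | FAnd g h => eval v g && eval v h
  | FOr g h => eval v g || eval v h
  | FImp g h => eval v g ==> eval v h
  end.

(* classical propositional consequence phi |- psi (semantic; sound and complete) *)
Definition entails (P : Type) (phi psi : form P) : Prop :=
  forall v : P -> bool, eval v phi -> eval v psi.
Definition fequiv (P : Type) (phi psi : form P) : Prop :=
  entails phi psi /\ entails psi phi.
Definition consistent (P : Type) (phi : form P) : Prop := ~ entails phi FBot.

Definition epistemic_space (P : finType) (Ep : Type) (B : Ep -> form P) : Prop :=
  inhabited Ep /\
  (forall phi : form P, consistent phi <-> exists e : Ep, fequiv (B e) phi).

(* A society (nonempty finite N ⊆ S) is represented by the list of its elements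
   in strictly increasing order, i_1 < ... < i_n. *)
Definition well_ordered d (S : orderType d) : Prop :=
  well_founded (fun x y : S => x < y).

Definition society d (S : orderType d) (N : seq S) : bool :=
  sorted (fun x y : S => x < y) N && (N != [::]).

Definition profile (S : eqType) (Ep : Type) (N : seq S) : Type :=
  {i : S | i \in N} -> Ep.

Definition prof_equiv (S : eqType) (Ep : Type) (N M : seq S)
  (Phi : profile Ep N) (Psi : profile Ep M) : Prop :=
  size N = size M /\
  forall (x0 y0 : S) (k : nat) (hN : (k < size N)%N) (hM : (k < size M)%N),
    Phi (exist _ (nth x0 N k) (mem_nth x0 hN)) =
    Psi (exist _ (nth y0 M k) (mem_nth y0 hM)).

(* a fusion operator: nabla N Phi E ; only its values on societies matter *)
Definition fusion_op (S : eqType) (Ep : Type) : Type :=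
  forall N : seq S, profile Ep N -> Ep -> Ep.

(* nabla on the singleton profile {i} -> e, identified with e *)
Definition nabla1 (S : eqType) (Ep : Type) (nabla : fusion_op S Ep)
  (i : S) (e : Ep) (E : Ep) : Ep :=
  nabla [:: i] (fun _ => e) E.

Definition bigAndN (S : eqType) (P : Type) (N : seq S)
  (f : {i : S | i \in N} -> form P) : form P :=
  foldr (fun i acc => match (insub i : option {i : S | i \in N}) with
                      | Some x => FAnd (f x) acc
                      | None => acc end) FTop N.

Section Postulates.
Local Unset Implicit Arguments.
Variables (P : finType) (Ep : Type) (B : Ep -> form P).
Variables (d : Order.disp_t) (S : orderType d) (nabla : fusion_op S Ep).

Definition ESF1 : Prop :=
  forall (N : seq S) (Phi : profile Ep N) (E : Ep), society N ->
    entails (B (nabla N Phi E)) (B E).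

Definition ESF2 : Prop :=
  forall (N M : seq S) (Phi : profile Ep N) (Psi : profile Ep M) (E E' : Ep),
    society N -> society M -> prof_equiv Phi Psi -> fequiv (B E) (B E') ->
    fequiv (B (nabla N Phi E)) (B (nabla M Psi E')).

Definition ESF3 : Prop :=
  forall (N : seq S) (Phi : profile Ep N) (E E' E'' : Ep), society N ->
    fequiv (B E) (FAnd (B E') (B E'')) ->
    entails (FAnd (B (nabla N Phi E')) (B E'')) (B (nabla N Phi E)).

Definition ESF4 : Prop :=
  forall (N : seq S) (Phi : profile Ep N) (E E' E'' : Ep), society N ->
    fequiv (B E) (FAnd (B E') (B E'')) ->
    consistent (FAnd (B (nabla N Phi E')) (B E'')) ->
    entails (B (nabla N Phi E)) (FAnd (B (nabla N Phi E')) (B E'')).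

Definition basic_fusion_operator : Prop := ESF1 /\ ESF2 /\ ESF3 /\ ESF4.

Definition ESF_U : Prop :=
  forall (N : seq S) (Phi : profile Ep N) (E : Ep), society N ->
    (forall i j : {i : S | i \in N}, Phi i = Phi j) ->
    forall i : {i : S | i \in N},
      fequiv (B (nabla N Phi E)) (B (nabla1 nabla (val i) (Phi i) E)).

Definition ESF_I : Prop :=
  forall (N : seq S) (Phi Phi' : profile Ep N) (E : Ep), society N ->
    (forall E' : Ep, entails (B E') (B E) ->
       forall j : {i : S | i \in N},
         fequiv (B (nabla1 nabla (val j) (Phi j) E'))
                (B (nabla1 nabla (val j) (Phi' j) E'))) ->
    fequiv (B (nabla N Phi E)) (B (nabla N Phi' E)).

Definition ESF_P : Prop :=
  forall (N : seq S) (Phi : profile Ep N) (E E' : Ep), society N ->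
    consistent (bigAndN (fun j => B (nabla1 nabla (val j) (Phi j) E))) ->
    (forall j : {i : S | i \in N},
       entails (FAnd (B (nabla1 nabla (val j) (Phi j) E)) (B E')) FBot) ->
    entails (FAnd (B (nabla N Phi E)) (B E')) FBot.
End Postulates.

Arguments ESF1 {P Ep} B {d S} nabla.
Arguments ESF2 {P Ep} B {d S} nabla.
Arguments ESF3 {P Ep} B {d S} nabla.
Arguments ESF4 {P Ep} B {d S} nabla.
Arguments basic_fusion_operator {P Ep} B {d S} nabla.
Arguments ESF_U {P Ep} B {d S} nabla.
Arguments ESF_I {P Ep} B {d S} nabla.
Arguments ESF_P {P Ep} B {d S} nabla.

(* Let u be a model of every ∇(E_j, E) and suppose some w satisfies ∇(Φ, E) ∧ E';
   then w falsifies every ∇(E_j, E). Cut E down to the two worlds u and w: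
   E2 ≡ E ∧ (u ∨ w), so that w ⊨ ∇(Φ, E2) by ESF3. Below E2 every single-agent
   revision ∇(E_j, E'') has the same unique model, namely u if u ⊨ E'' and w
   otherwise (at E2 itself ESF4 excludes w). Hence ESF-I and ESF-U give
   ∇(Φ, E2) ≡ ∇(E_j0, E2), whose only model is u, so w = u: a contradiction. *)
From mathcomp Require Import all_boot all_order.
From Stdlib Require Import Classical FunctionalExtensionality.
Set Implicit Arguments. Unset Strict Implicit.

Definition world (P : finType) (u : P -> bool) : form P :=
  foldr (fun p acc => FAnd (if u p then FVar p else FNeg (FVar p)) acc) FTop (enum P).

Lemma eval_world (P : finType) (u v : P -> bool) : eval v (world u) -> v = u.
Proof.
move=> v_u; apply: functional_extensionality => p.
have : p \in enum P by rewrite mem_enum.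
move: v_u; rewrite /world; elim: (enum P) => [|q s IH] //= /andP[v_q v_s].
rewrite inE => /orP[/eqP->|]; last exact: IH.
by move: v_q; case: (u q) => /=; [|move/negbTE]; move=> ->.
Qed.

Lemma eval_world_self (P : finType) (u : P -> bool) : eval u (world u).
Proof.
rewrite /world; elim: (enum P) => [|q s IH] //=.
by rewrite IH andbT; case u_q: (u q) => //=; rewrite u_q.
Qed.

Lemma consistentP (P : Type) (phi : form P) :
  consistent phi <-> exists v, eval v phi.
Proof.
split=> [phi_cons | [v v_phi] phi_bot]; last by have := phi_bot v v_phi.
by apply: NNPP => no_model; apply: phi_cons => v v_phi; case: no_model; exists v.
Qed.

Lemma bigAndN_eval (S : eqType) (P : Type) (N : seq S)
  (f : {i : S | i \in N} -> form P) v :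
  eval v (bigAndN f) -> forall j, eval v (f j).
Proof.
rewrite /bigAndN; set F := (fun i acc => _) => v_f j.
suff: forall s, eval v (foldr F FTop s) -> val j \in s -> eval v (f j).
  by apply; [exact: v_f | exact: valP].
elim=> [|x s IH] //=.
rewrite {1}/F; case x_N: insub => [y|] v_x; rewrite inE => /orP[/eqP x_j|j_s].
- by move: x_N v_x; rewrite -x_j valK => -[<-] /andP[].
- by apply: IH j_s; case/andP: v_x.
- by move: x_N; rewrite -x_j valK.
- exact: IH.
Qed.

Lemma society_inhabited d (S : orderType d) (N : seq S) :
  society N -> inhabited {i : S | i \in N}.
Proof. by case: N => [|x s] /andP[] // _ _; constructor; exists x; rewrite inE eqxx. Qed.

Definition sole_model (P : Type) (phi : form P) (x : P -> bool) : Prop :=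
  forall v, eval v phi -> v = x.

Section BasicFusion.
Variables (P : finType) (Ep : Type) (B : Ep -> form P).
Variables (d : Order.disp_t) (S : orderType d).
(* Otherwise the society argument of [nabla] and the binders of the postulates
   would become implicit. *)
Local Unset Implicit Arguments.
Variable nabla : fusion_op S Ep.
Hypothesis B_has_model : forall e, exists v, eval v (B e).
Hypotheses (esf1 : ESF1 B nabla) (esf2 : ESF2 B nabla) (esf4 : ESF4 B nabla).
Hypotheses (esfU : ESF_U B nabla) (esfI : ESF_I B nabla).
Local Set Implicit Arguments.

Lemma sole_model_fequiv e1 e2 x :
  sole_model (B e1) x -> sole_model (B e2) x -> fequiv (B e1) (B e2).
Proof.
have model_x e : sole_model (B e) x -> eval x (B e).
  by move=> sole_e; have [v v_e] := B_has_model e; rewrite -(sole_e v).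
by move=> sole1 sole2; split=> v; [move/sole1 | move/sole2] => ->; apply: model_x.
Qed.

Lemma nabla1_entails i e E : entails (B (nabla1 nabla i e E)) (B E).
Proof. exact: esf1. Qed.

Lemma nabla1_fequiv i k e E E' :
  fequiv (B E) (B E') -> fequiv (B (nabla1 nabla i e E)) (B (nabla1 nabla k e E')).
Proof. by move=> E_E'; apply: esf2 => //; split. Qed.

Section TwoWorlds.
Variables (u w : P -> bool) (E Euw E2 : Ep).
Hypothesis Euw_within : forall v, eval v (B Euw) -> v = u \/ v = w.
Hypothesis u_Euw : eval u (B Euw).
Hypothesis E2_def : fequiv (B E2) (FAnd (B E) (B Euw)).

Lemma E2_within v : eval v (B E2) -> v = u \/ v = w.
Proof. by move/E2_def.1 => /andP[_]; apply: Euw_within. Qed.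

Lemma nabla1_E2_sole a e :
  eval u (B (nabla1 nabla a e E)) -> ~~ eval w (B (nabla1 nabla a e E)) ->
  sole_model (B (nabla1 nabla a e E2)) u.
Proof.
move=> u_a w_a v v_a2.
have cons_a : consistent (FAnd (B (nabla1 nabla a e E)) (B Euw)).
  by apply/consistentP; exists u; rewrite /= u_a u_Euw.
have /andP[v_a /Euw_within[//|v_w]] :=
  esf4 [:: a] (fun=> e) E2 E Euw isT E2_def cons_a v v_a2.
by case/negP: w_a; rewrite -v_w.
Qed.

Lemma nabla1_below_E2 a e i E'' :
  eval u (B (nabla1 nabla a e E)) -> ~~ eval w (B (nabla1 nabla a e E)) ->
  entails (B E'') (B E2) ->
  sole_model (B (nabla1 nabla i e E'')) (if eval u (B E'') then u else w).
Proof.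
move=> u_a w_a E''_E2 v v_i.
have v_E'' := nabla1_entails v_i.
have [v_u|v_w] := E2_within (E''_E2 v v_E''); first by rewrite -v_u v_E''.
case: ifP => // u_E''.
have E2_E'' : fequiv (B E2) (B E'').
  by split=> // v' /E2_within[] ->; rewrite ?u_E'' -?v_w.
apply: (nabla1_E2_sole u_a w_a); apply: (nabla1_fequiv a i e E2_E'').2.
exact: v_i.
Qed.

Lemma nabla_E2_sole N (Phi : profile Ep N) : society N ->
  (forall j, eval u (B (nabla1 nabla (val j) (Phi j) E))) ->
  (forall j, ~~ eval w (B (nabla1 nabla (val j) (Phi j) E))) ->
  sole_model (B (nabla N Phi E2)) u.
Proof.
move=> socN u_Phi w_Phi; case: (society_inhabited socN) => j0.
pose Phi0 : profile Ep N := fun=> Phi j0.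
have Phi_Phi0 : fequiv (B (nabla N Phi E2)) (B (nabla N Phi0 E2)).
  apply: esfI => // E'' E''_E2 j; apply: sole_model_fequiv.
  - exact: nabla1_below_E2 (u_Phi j) (w_Phi j) E''_E2.
  - exact: nabla1_below_E2 (u_Phi j0) (w_Phi j0) E''_E2.
have Phi0_j0 := esfU N Phi0 E2 socN (fun _ _ => erefl) j0.
by move=> v /Phi_Phi0.1 /Phi0_j0.1; apply: nabla1_E2_sole.
Qed.

End TwoWorlds.
End BasicFusion.

Theorem mainTheorem12 (P : finType) (Ep : Type) (B : Ep -> form P)
  (d : Order.disp_t) (S : orderType d) (nabla : fusion_op S Ep) :
  epistemic_space B -> well_ordered S ->
  basic_fusion_operator B nabla ->
  ESF_U B nabla -> ESF_I B nabla -> ESF_P B nabla.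
Proof.
move=> [_ representable] _ [esf1 [esf2 [esf3 esf4]]] esfU esfI N Phi E E' socN.
move=> /consistentP[u /bigAndN_eval u_Phi] disjoint w /= /andP[w_Phi w_E'].
have B_has_model e : exists v, eval v (B e).
  by apply/(consistentP (B e))/representable; exists e; split.
have w_E : eval w (B E) by apply: esf1 w_Phi.
have w_Phi_j j : ~~ eval w (B (nabla1 nabla (val j) (Phi j) E)).
  by apply/negP => w_j; have := disjoint j w; rewrite /= w_j w_E' => /(_ isT).
have [Euw Euw_def] : exists e, fequiv (B e) (FOr (world u) (world w)).
  by apply/representable/consistentP; exists u; rewrite /= eval_world_self.
have Euw_within v : eval v (B Euw) -> v = u \/ v = w.
  by move/Euw_def.1 => /orP[] /eval_world; [left|right].
have u_Euw : eval u (B Euw) by apply: Euw_def.2; rewrite /= eval_world_self.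
have w_Euw : eval w (B Euw) by apply: Euw_def.2; rewrite /= eval_world_self orbT.
have [E2 E2_def] : exists e, fequiv (B e) (FAnd (B E) (B Euw)).
  by apply/representable/consistentP; exists w; rewrite /= w_E w_Euw.
have w_E2 : eval w (B (nabla N Phi E2)).
  by apply: (esf3 N Phi E2 E Euw socN E2_def); rewrite /= w_Phi w_Euw.
have w_u := nabla_E2_sole B_has_model esf1 esf2 esf4 esfU esfI Euw_within
  u_Euw E2_def socN u_Phi w_Phi_j w_E2.
case: (society_inhabited socN) => j0.
by move: (w_Phi_j j0); rewrite w_u u_Phi.
Qed.
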